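(* Let $\Delta$ be a positive integer and let $f\colon\mathbb{N}\to\mathbb{R}$ be a superlinear function with $f(r)\geq \Delta r+1$ for all $r\in\mathbb{N}$. Then every finite graph $G$ with maximum degree $\Delta$ has a uniform subdivision $\tilde G$ with growth $f_{\tilde G}(r)\leq f(r)$ for every positive integer $r$.
   Context: $\mathbb{N}$ is the set of positive integers. A function $f\colon\mathbb{N}\to\mathbb{R}$ is superlinear if $f(x)/x\to\infty$ as $x\to\infty$. The growth of a finite graph $G$ is the function $f_G\colon\mathbb{N}\to\mathbb{N}$ where $f_G(r)$ is the maximum of $|V(H)|$ over all subgraphs $H$ of $G$ of radius at most $r$. A subdivision of $G$ is a graph obtained by replacing each edge $vw$ by a path $P_{vw}$ with endpoints $v$ and $w$, internally disjoint from the rest of the graph; it is uniform if all the paths $P_{vw}$ have the same length. *)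

From HB Require Import structures.
From mathcomp Require Import all_boot all_order all_algebra.
From mathcomp Require Import reals.
Set Implicit Arguments. Unset Strict Implicit. Unset Printing Implicit Defensive.
Import Order.TTheory GRing.Theory Num.Theory.

Definition simple_graph (V : finType) (e : rel V) :=
  symmetric e /\ irreflexive e.

Definition degree (V : finType) (e : rel V) (v : V) : nat := #|[set w | e v w]|.
Definition max_degree (V : finType) (e : rel V) : nat := \max_(v : V) degree e v.

Fixpoint reach (V : finType) (F : {set V * V}) (r : nat) (x y : V) : bool :=
  match r with
  | 0 => x == y
  | r'.+1 => reach F r' x y || [exists z, ((x, z) \in F) && reach F r' z y]
  end.

Definition is_subgraph (V : finType) (e : rel V) (S : {set V}) (F : {set V * V}) : bool :=
  [forall p : V * V, (p \in F) ==>
     [&& e p.1 p.2, p.1 \in S, p.2 \in S & ((p.2, p.1) \in F)]].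

(* the subgraph (S, F) has radius at most r: some centre c in S reaches every
   vertex of S within distance r inside (S, F) (this forces connectedness
   and nonemptiness). *)
Definition radius_le (V : finType) (S : {set V}) (F : {set V * V}) (r : nat) : bool :=
  [exists c in S, [forall x in S, reach F r c x]].

Definition growth (V : finType) (e : rel V) (r : nat) : nat :=
  \max_(S : {set V}) \max_(F : {set V * V} | is_subgraph e S F && radius_le S F r) #|S|.

(* The uniform subdivision of (T, e) in which every edge uv is replaced by a
   path of length k (k >= 1; k = 1 gives the graph itself).
   Vertices: original vertices inl v, and internal vertices inr (u, v, i) for
   each edge uv (listed once, with rank u < rank v) and 1 <= i <= k-1;
   the vertex inr (u,v,i) sits at position i on the path u = pos 0, ..., v = pos k. *)
Section Subdivision.
Variables (T : finType) (e : rel T) (k : nat).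

Definition sd_edge (u v : T) : bool := e u v && (enum_rank u < enum_rank v)%N.

Definition sd_valid (x : T + (T * T * 'I_k)) : bool :=
  match x with
  | inl _ => true
  | inr (u, v, i) => sd_edge u v && (0 < i)%N
  end.

Definition sd_vertex := {x : T + (T * T * 'I_k) | sd_valid x}.

Definition sd_pos (u v : T) (x : T + (T * T * 'I_k)) : option nat :=
  match x with
  | inl w => if w == u then Some 0%N else if w == v then Some k else None
  | inr (u', v', i) => if (u' == u) && (v' == v) then Some (nat_of_ord i) else None
  end.

Definition sd_adj (x y : sd_vertex) : bool :=
  [exists u : T, exists v : T, sd_edge u v &&
     match sd_pos u v (val x), sd_pos u v (val y) with
     | Some p, Some q => (p.+1 == q) || (q.+1 == p)
     | _, _ => false
     end].
End Subdivision.

Local Open Scope ring_scope.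
Definition superlinear (R : realType) (f : nat -> R) : Prop :=
  forall M : R, exists N : nat, forall x : nat, (N <= x)%N -> (0 < x)%N ->
    M <= f x / x%:R.

From HB Require Import structures.
From mathcomp Require Import all_boot all_order all_algebra.
From mathcomp Require Import reals.
From mathcomp Require Import zify.
Import Order.TTheory GRing.Theory Num.Theory.
Set Implicit Arguments. Unset Strict Implicit. Unset Printing Implicit Defensive.

(* Take paths of odd length k = 2N + 1. A subgraph of radius r lies in the
   r-ball around its centre, and balls are measured by 1-Lipschitz potentials
   vanishing at the centre. If 2r < k, a ball meets at most one branch vertex,
   so it is the centre plus at most Delta arms of length r: at most
   Delta r + 1 <= f r vertices. If 2r >= k, the whole subdivision has at most
   C k <= 2 C r vertices with C = |T| + |T|^2, and superlinearity gives
   2 C r <= f r once N is large. For Delta = 1 no subdivision is needed: the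
   graph is a matching, whose growth is at most 2 <= f r. *)

Section Graphs.
Variables (W : finType) (e : rel W).

Lemma reach_potential (F : {set W * W}) (phi : W -> nat) :
  (forall x z, (x, z) \in F -> phi z <= (phi x).+1) ->
  forall r x y, reach F r x y -> phi y <= phi x + r.
Proof.
move=> phiF; elim=> [|r IHr] x y /=; first by move/eqP->; rewrite addn0.
case/orP; first by move/IHr; rewrite addnS => /leqW.
case/existsP=> z /andP[xz zy]; have := IHr _ _ zy; have := phiF _ _ xz; lia.
Qed.

Lemma growth_le_potential r B :
  (forall c : W, exists2 phi : W -> nat,
     phi c = 0 /\ (forall x y, e x y -> phi y <= (phi x).+1) &
     #|[set y | phi y <= r]| <= B) ->
  growth e r <= B.
Proof.
move=> pot; apply/bigmax_leqP => S _; apply/bigmax_leqP => F /andP[SF].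
case/existsP=> c /andP[cS /forallP reach_c].
have [phi [phi_c phi_lip] ball_le] := pot c.
apply: leq_trans ball_le; apply/subset_leq_card/subsetP => x xS; rewrite inE.
have Fe y z : (y, z) \in F -> e y z.
  by move=> yz; case/and4P: (implyP (forallP SF (y, z)) yz).
have := reach_potential (phi := phi) _ (implyP (reach_c x) xS).
by rewrite phi_c; apply=> y z /Fe /phi_lip.
Qed.

Lemma growth_le_closed r B :
  (forall c : W, exists A : {set W},
     [/\ c \in A, forall x y, e x y -> x \in A -> y \in A & #|A| <= B]) ->
  growth e r <= B.
Proof.
move=> closed; apply: growth_le_potential => c.
have [A [cA A_closed A_le]] := closed c.
exists (fun y => if y \in A then 0 else r.+1); first split.
- by rewrite cA.
- by move=> x y /A_closed; case: (x \in A) => [->|] // _; case: ifP.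
apply: leq_trans A_le; apply/subset_leq_card/subsetP => y; rewrite inE.
by case: ifP; rewrite ?ltnn.
Qed.

Lemma growth_le_card r : growth e r <= #|W|.
Proof. by apply: growth_le_potential => c; exists (fun=> 0) => //; exact: max_card. Qed.

Lemma degree_le_max (w : W) : degree e w <= max_degree e.
Proof. exact: (leq_bigmax (F := degree e)). Qed.

Lemma neighbor_uniq (w a b : W) : max_degree e <= 1 -> e w a -> e w b -> a = b.
Proof.
move=> Ed wa wb; apply/eqP; have := leq_trans (degree_le_max w) Ed.
apply: contraTT => a_neq_b; rewrite -ltnNge /degree.
have ab_sub : [set a; b] \subset [set z | e w z].
  by apply/subsetP => z; rewrite !inE => /orP[] /eqP ->.
by have := subset_leq_card ab_sub; rewrite cards2 a_neq_b.
Qed.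

End Graphs.

Lemma card_ord_range n a b : #|[set j : 'I_n | a <= j <= b]| <= b.+1 - a.
Proof.
rewrite cardE -(size_map val) -(size_iota a (b.+1 - a)).
apply: uniq_leq_size; first by rewrite (map_inj_uniq val_inj) enum_uniq.
move=> x /mapP[j]; rewrite mem_enum inE => /andP[aj jb] ->.
by rewrite mem_iota; move: aj jb; case: j => j /= _; lia.
Qed.

Section Subdivision.
Variables (T : finType) (e : rel T) (k : nat).
Hypothesis e_simple : simple_graph e.
Local Notation V := (sd_vertex e k).

Lemma e_sym u v : e u v -> e v u.
Proof. by case: e_simple => e_symmetric _; rewrite e_symmetric. Qed.

Lemma sd_edge_neq u v : sd_edge e u v -> u != v.
Proof. by case/andP=> _; apply: contraTneq => ->; rewrite ltnn. Qed.

Lemma sd_edge_asym u v : sd_edge e u v -> sd_edge e v u -> False.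
Proof. by case/andP=> _ uv /andP[_ vu]; move: (ltn_trans uv vu); rewrite ltnn. Qed.

Lemma sd_pos_le (u v : T) (x : T + (T * T * 'I_k)) p : sd_pos u v x = Some p -> p <= k.
Proof.
case: x => [x|[[a b] j]] /=.
  by case: eqP => _; [case=> <-|case: eqP => _ // [<-]].
by case: ifP => // _ [<-]; exact: ltnW.
Qed.

Lemma sd_pos_inl (u v x : T) p : sd_pos (k := k) u v (inl x) = Some p ->
  (x = u /\ p = 0) \/ (x = v /\ p = k).
Proof.
rewrite /=; case: eqP => [-> [<-]|_]; first by left.
by case: eqP => // -> [<-]; right.
Qed.

Lemma sd_pos_inr (u v a b : T) (j : 'I_k) p : sd_pos u v (inr (a, b, j)) = Some p ->
  [/\ a = u, b = v & p = j].
Proof. by rewrite /=; case: ifP => // /andP[/eqP -> /eqP ->] [<-]. Qed.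

Lemma sd_pos_inj u v (x y : V) p : 0 < k -> sd_edge e u v ->
  sd_pos u v (val x) = Some p -> sd_pos u v (val y) = Some p -> x = y.
Proof.
move=> k_gt0 uv px py; apply: val_inj.
case: x px => [[x|[[a b] j]] /= xP] px; case: y py => [[y|[[a' b'] j']] /= yP] py.
- case/sd_pos_inl: px => [[? ?]|[? ?]]; case/sd_pos_inl: py => [[? ?]|[? ?]];
    by subst => //; lia.
- case/sd_pos_inr: py => _ _ pj; case/andP: yP => _; have := ltn_ord j'.
  by case/sd_pos_inl: px => [[_ ?]|[_ ?]]; lia.
- case/sd_pos_inr: px => _ _ pj; case/andP: xP => _; have := ltn_ord j.
  by case/sd_pos_inl: py => [[_ ?]|[_ ?]]; lia.
- case/sd_pos_inr: px => -> -> pj; case/sd_pos_inr: py => -> -> pj'.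
  by congr (inr (_, _, _)); apply: val_inj; rewrite /= -pj -pj'.
Qed.

Lemma sd_adj_along_edge u v (x y : V) p : 1 < k -> sd_edge e u v -> sd_adj x y ->
  sd_pos u v (val x) = Some p ->
  if sd_pos u v (val y) is Some q then (p.+1 == q) || (q.+1 == p)
  else (p == 0) || (p == k).
Proof.
move=> k_gt1 uv /existsP[u' /existsP[v' /andP[u'v' xy]]] px.
case px': (sd_pos u' v' (val x)) xy => [p'|] //.
case py': (sd_pos u' v' (val y)) => [q'|] // xy.
case: x px px' => [[x0|[[a b] j]] xP] /= px px'.
- case py: (sd_pos u v (val y)) => [q|]; last first.
    by case/sd_pos_inl: px => [[_ ->]|[_ ->]]; rewrite eqxx ?orbT.
  case: y py py' => [[y0|[[a b] j]] yP] /= py py'.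
  + (* two branch vertices are adjacent only when [k = 1] *)
    by case/sd_pos_inl: px' => [[_ ?]|[_ ?]]; case/sd_pos_inl: py' => [[_ ?]|[_ ?]];
      subst; move: xy; lia.
  + case/sd_pos_inr: py => ? ? ?; case/sd_pos_inr: py' => ? ? ?; subst.
    by rewrite px in px'; case: px' => ->.
- case/sd_pos_inr: px => ? ? ?; case/sd_pos_inr: px' => ? ? ?; subst.
  by rewrite py'.
Qed.

(* For [k > 0], the distance in the subdivision from the branch vertex [w],
   truncated at [k.+1]. *)
Definition vdist (w : T) (x : V) : nat :=
  match val x with
  | inl x0 => if x0 == w then 0 else if e w x0 then k else k.+1
  | inr (a, b, j) => if a == w then nat_of_ord j else if b == w then k - j else k.+1
  end.

Lemma vdist_on_edge w u v (x : V) p : sd_edge e u v -> sd_pos u v (val x) = Some p ->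
  [/\ w = u -> vdist w x = p, w = v -> vdist w x = k - p
    & w != u -> w != v -> k <= vdist w x <= k.+1].
Proof.
move=> uv; have u_neq_v := sd_edge_neq uv; have e_uv : e u v by case/andP: uv.
have e_vu := e_sym e_uv.
case: x => [[x0|[[a b] j]] xP] /= px; rewrite /vdist /=.
- case/sd_pos_inl: px => [[-> ->]|[-> ->]]; split => [->|->|].
  + by rewrite eqxx.
  + by rewrite (negbTE u_neq_v) e_vu subn0.
  + by move=> wu _; rewrite eq_sym (negbTE wu); case: (e w u); lia.
  + by rewrite eq_sym (negbTE u_neq_v) e_uv.
  + by rewrite eqxx subnn.
  + by move=> _ wv; rewrite eq_sym (negbTE wv); case: (e w v); lia.
- case/sd_pos_inr: px => -> -> ->; split => [->|->|].
  + by rewrite eqxx.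
  + by rewrite (negbTE u_neq_v) eqxx.
  + by move=> wu wv; rewrite eq_sym (negbTE wu) eq_sym (negbTE wv); lia.
Qed.

Lemma vdist_lipschitz w (x y : V) : sd_adj x y -> vdist w y <= (vdist w x).+1.
Proof.
case/existsP=> u /existsP[v /andP[uv]].
case px: (sd_pos u v (val x)) => [p|] //; case py: (sd_pos u v (val y)) => [q|] // pq.
have p_le := sd_pos_le px; have q_le := sd_pos_le py.
have [xu xv xfar] := vdist_on_edge w uv px; have [yu yv yfar] := vdist_on_edge w uv py.
have [wu | wu] := eqVneq w u; first by rewrite xu // yu //; lia.
have [wv | wv] := eqVneq w v; first by rewrite xv // yv //; lia.
by move: (xfar wu wv) (yfar wu wv); lia.
Qed.

(* For [x] inside a path ending at [w]: the other end of that path and the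
   depth of [x] below [w]; junk elsewhere. *)
Definition arm_coord (w : T) (x : V) : option T * 'I_k.+1 :=
  match val x with
  | inl _ => (None, ord0)
  | inr (a, b, j) => if a == w then (Some b, inord j) else (Some a, inord (k - j))
  end.

Lemma arm_coord_inj w m : m < k ->
  {in [set x : V | vdist w x <= m] &, injective (arm_coord w)}.
Proof.
have inordK' i : i <= k -> (inord i : 'I_k.+1) = i :> nat by move=> ik; rewrite inordK.
move=> mk [[x1|[[a b] j]] P1] [[x2|[[a' b'] j']] P2]; rewrite !inE /vdist /arm_coord /=.
- move=> x1m x2m _; apply: val_inj => /=.
  move: x1m x2m; case: eqP => [->|_]; last by case: (e w x1); lia.
  by case: eqP => [->|_] //; case: (e w x2); lia.
- by move=> _ _; case: ifP.
- by move=> _ _; case: ifP.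
- have jk := ltn_ord j; have j'k := ltn_ord j'.
  have /andP[ab _] := P1; have /andP[a'b' _] := P2.
  case: (a =P w) => aw; case: (a' =P w) => a'w => jm j'm [] end_eq /(congr1 val).
  + rewrite /= !inordK'; try lia; move=> jj'.
    by apply: val_inj; rewrite /= aw a'w end_eq; congr (inr (_, _, _)); apply: val_inj.
  + move: j'm; case: eqP => [b'w|_]; last lia.
    by case: (sd_edge_asym ab); rewrite end_eq aw -b'w.
  + move: jm; case: eqP => [bw|_]; last lia.
    by case: (sd_edge_asym ab); rewrite end_eq bw -a'w.
  + move: jm j'm; case: eqP => [bw|_]; last lia.
    case: eqP => [b'w|_]; last lia.
    move=> _ _; rewrite /= !inordK'; try lia; move=> jj'.
    apply: val_inj; rewrite /= end_eq bw b'w; congr (inr (_, _, _)); apply: val_inj => /=; lia.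
Qed.

Lemma arm_coordP w m (x : V) : m < k -> vdist w x <= m -> val x != inl w ->
  exists b (j : 'I_k.+1), [/\ arm_coord w x = (Some b, j), e w b, 0 < j <= m &
     exists i : 'I_k, val x = inr (w, b, i) \/ val x = inr (b, w, i)].
Proof.
move=> mk; case: x => [[x0|[[a b] j]] xP]; rewrite /vdist /arm_coord /=.
  by case: eqP => [->|_]; [rewrite eqxx | case: (e w x0); lia].
case/andP: xP => /andP[e_ab _] j_gt0; have jk := ltn_ord j.
case: (a =P w) => [aw|_] jm _.
  exists b, (inord j); split; first by [].
  - by rewrite -aw.
  - by rewrite inordK; lia.
  - by exists j; left; rewrite aw.
move: jm; case: (b =P w) => [bw|_] jm; last lia.
exists a, (inord (k - j)); split; first by [].
- by rewrite -bw; apply: e_sym.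
- by rewrite inordK; lia.
- by exists j; right; rewrite bw.
Qed.

Lemma card_arms w m (X : {set T}) (A : {set V}) : m < k ->
  (forall x, x \in A -> vdist w x <= m /\ val x != inl w) ->
  (forall x b, x \in A -> (arm_coord w x).1 = Some b -> b \in X) ->
  #|A| <= #|X| * m.
Proof.
move=> mk A_ball A_end.
have A_inj : {in A &, injective (arm_coord w)}.
  by move=> x y /A_ball[xm _] /A_ball[ym _]; apply: (arm_coord_inj mk); rewrite inE.
set J := [set j : 'I_k.+1 | 1 <= j <= m].
have A_arms : arm_coord w @: A \subset [set (Some p.1, p.2) | p in setX X J].
  apply/subsetP => _ /imsetP[x xA ->]; have [xm x_branch] := A_ball x xA.
  have [b [j [xbj _ jm _]]] := arm_coordP mk xm x_branch.
  have bX : b \in X by apply: A_end xA _; rewrite xbj.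
  by apply/imsetP; exists (b, j); rewrite ?xbj // !inE bX.
rewrite -(card_in_imset A_inj); apply: leq_trans (subset_leq_card A_arms) _.
apply: leq_trans (leq_imset_card _ _) _; rewrite cardsX leq_mul2l.
by have := card_ord_range k.+1 1 m; rewrite subn1 orbC => ->.
Qed.

Definition branch (w : T) : V := exist _ (inl w) isT.

Lemma card_vertex_ball w m : m < k ->
  #|[set x : V | vdist w x <= m]| <= degree e w * m + 1.
Proof.
move=> mk; rewrite (cardsD1 (branch w)) addnC leq_add ?leq_b1 //.
have val_branch (x : V) : x != branch w -> val x != inl w.
  by apply: contra => /eqP x_w; apply/eqP/val_inj.
apply: (card_arms (w := w) mk) => [x|x b]; rewrite !inE => /andP[/val_branch x_branch xm] //.
by have [c [j [-> e_wc _ _]] [<-]] := arm_coordP mk xm x_branch.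
Qed.

Lemma card_off_edge_ball u v w w' m : sd_edge e u v ->
  (w = u /\ w' = v) \/ (w = v /\ w' = u) -> m < k ->
  #|[set x : V | (sd_pos u v (val x) == None) && (vdist w x <= m)]| <= (degree e w).-1 * m.
Proof.
move=> uv ww' mk; have e_uv : e u v by case/andP: uv.
have e_ww' : e w w' by case: ww' => [][-> ->] //; apply: e_sym.
have -> : (degree e w).-1 = #|[set b | e w b] :\ w'|.
  by rewrite /degree (cardsD1 w') inE e_ww'.
have off_branch (x : V) : sd_pos u v (val x) = None -> val x != inl w.
  move=> off_uv; apply/eqP => x_w; move: off_uv; rewrite x_w /=.
  by case: ww' => [][-> _]; rewrite eqxx //; case: eqP.
apply: (card_arms (w := w) mk) => [x|x b]; rewrite inE => /andP[/eqP off_uv xm].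
  by split=> //; apply: off_branch.
have [c [j [-> e_wc _ [i x_arm]]] [<-]] := arm_coordP mk xm (off_branch x off_uv).
rewrite !inE e_wc andbT; apply/eqP => c_w'; have xP := valP x.
case: ww' x_arm => [][w_u w'_v]; rewrite c_w' w_u w'_v => -[] x_arm;
  move: off_uv xP; rewrite x_arm /= ?eqxx // => _ /andP[vu _]; exact: sd_edge_asym uv vu.
Qed.

Lemma card_edge_window u v a b : 0 < k -> sd_edge e u v ->
  #|[set x : V | if sd_pos u v (val x) is Some p then a <= p <= b else false]| <= b.+1 - a.
Proof.
move=> k_gt0 uv; set A := [set x : V | _].
pose pos (x : V) : 'I_k.+1 := inord (odflt 0 (sd_pos u v (val x))).
have pos_inj : {in A &, injective pos}.
  move=> x y; rewrite !inE /pos.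
  case px: (sd_pos u v (val x)) => [p|] // _; case py: (sd_pos u v (val y)) => [q|] // _.
  move=> /(congr1 val) /=; rewrite !inordK ?ltnS ?(sd_pos_le px) ?(sd_pos_le py) // => pq.
  by apply: (sd_pos_inj k_gt0 uv px); rewrite py pq.
rewrite -(card_in_imset pos_inj); apply: (leq_trans _ (card_ord_range k.+1 a b)).
apply/subset_leq_card/subsetP => _ /imsetP[x + ->]; rewrite !inE /pos.
by case px: (sd_pos u v (val x)) => [p|] //=; rewrite inordK // ltnS (sd_pos_le px).
Qed.

Definition edge_offset u v (i : nat) (x : V) : nat :=
  if sd_pos u v (val x) is Some p then (p - i) + (i - p) else k.

Lemma edge_offset_le u v i x : i <= k -> edge_offset u v i x <= k.
Proof.
by rewrite /edge_offset; case px: (sd_pos u v (val x)) => [p|] //; have := sd_pos_le px; lia.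
Qed.

(* A 1-Lipschitz potential vanishing at the vertex at position [i] on the path
   of [uv]: leave through [u], leave through [v], or stay on the path. *)
Definition idist u v (i : nat) (x : V) : nat :=
  minn (minn (i + vdist u x) (k - i + vdist v x)) (edge_offset u v i x).

Lemma idist_lipschitz u v i (x y : V) : 1 < k -> i <= k -> sd_edge e u v -> sd_adj x y ->
  idist u v i y <= (idist u v i x).+1.
Proof.
move=> k_gt1 ik uv xy.
have via_u : idist u v i y <= i + vdist u y by rewrite /idist; lia.
have via_v : idist u v i y <= k - i + vdist v y by rewrite /idist; lia.
have on_edge : idist u v i y <= edge_offset u v i y by rewrite /idist; lia.
have lip_u := vdist_lipschitz u xy; have lip_v := vdist_lipschitz v xy.
rewrite /idist -!minnSS !leq_min -!andbA; apply/and3P; split; try lia.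
rewrite {2}/edge_offset; case px: (sd_pos u v (val x)) => [p|]; last first.
  by apply: leq_trans on_edge (leqW (edge_offset_le _ _ _ ik)).
have := sd_adj_along_edge k_gt1 uv xy px; have p_le := sd_pos_le px.
case py: (sd_pos u v (val y)) => [q|] pq.
  by apply: leq_trans on_edge _; rewrite /edge_offset py; move: pq; lia.
have [xu _ _] := vdist_on_edge u uv px; have [_ xv _] := vdist_on_edge v uv px.
by case/orP: pq => /eqP p_end; [move: (xu erefl) lip_u via_u | move: (xv erefl) lip_v via_v]; lia.
Qed.

Lemma card_inner_ball u v i r d : sd_edge e u v -> 0 < i < k -> 2 * r < k ->
  degree e u <= d -> degree e v <= d -> 1 < d ->
  #|[set x : V | idist u v i x <= r]| <= d * r + 1.
Proof.
move=> uv /andP[i_gt0 ik] rk du dv d_gt1.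
set window := [set x : V | if sd_pos u v (val x) is Some p
                           then i - r <= p <= minn (i + r) k else false].
set off_u := [set x : V | (sd_pos u v (val x) == None) && (vdist u x <= r - i)].
set off_v := [set x : V | (sd_pos u v (val x) == None) && (vdist v x <= r - (k - i))].
have ball_sub : [set x : V | idist u v i x <= r] \subset window :|: off_u :|: off_v.
  apply/subsetP => x; rewrite !inE /idist /edge_offset.
  case px: (sd_pos u v (val x)) => [p|] /=.
    have [xu _ _] := vdist_on_edge u uv px; have [_ xv _] := vdist_on_edge v uv px.
    by rewrite (xu erefl) (xv erefl); have := sd_pos_le px; lia.
  by lia.
apply: leq_trans (subset_leq_card ball_sub) _.
apply: leq_trans (leq_card_setU _ _) _.
apply: leq_trans (leq_add (leq_card_setU _ _) (leqnn _)) _.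
have := card_edge_window (i - r) (minn (i + r) k) (ltn_trans i_gt0 ik) uv.
have ru : r - i < k by lia.
have rv : r - (k - i) < k by lia.
have := card_off_edge_ball uv (or_introl (conj erefl erefl)) ru.
have := card_off_edge_ball uv (or_intror (conj erefl erefl)) rv.
have : (degree e u).-1 * (r - i) <= d.-1 * (r - i) by rewrite leq_mul2r; lia.
have : (degree e v).-1 * (r - (k - i)) <= d.-1 * (r - (k - i)) by rewrite leq_mul2r; lia.
rewrite -/window -/off_u -/off_v; nia.
Qed.

Lemma growth_sd_long_paths r d : 2 * r < k -> max_degree e <= d -> 1 < d ->
  growth (@sd_adj T e k) r <= d * r + 1.
Proof.
move=> rk Ed d_gt1.
have deg_le w : degree e w <= d by apply: leq_trans Ed; exact: degree_le_max.
apply: growth_le_potential => -[[w|[[u v] i]] cP].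
- exists (vdist w); first by split=> [|x y]; [rewrite /vdist /= eqxx | exact: vdist_lipschitz].
  apply: leq_trans (card_vertex_ball w _) _; first lia.
  by rewrite leq_add2r leq_mul2r deg_le orbT.
- have /andP[uv i_gt0] := cP; have ik := ltn_ord i.
  exists (idist u v i); last by apply: card_inner_ball; rewrite ?i_gt0.
  split=> [|x y]; last by apply: idist_lipschitz; lia.
  by rewrite /idist /edge_offset /= !eqxx /=; lia.
Qed.

Lemma card_sd_vertex : 0 < k -> #|{: V}| <= (#|T| + #|T| * #|T|) * k.
Proof.
move=> k_gt0; apply: leq_trans (leq_card (T' := (T + T * T * 'I_k)%type) val val_inj) _.
by rewrite card_sum !card_prod card_ord mulnDl leq_add2r leq_pmulr.
Qed.

Section Unsubdivided.
Hypothesis k1 : k = 1.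

Lemma sd_branchP (x : V) : exists w, x = branch w.
Proof.
case: x => [[w|[[a b] j]] xP]; first by exists w; apply: val_inj.
by case/andP: (xP) => _; have := ltn_ord j; lia.
Qed.

Lemma sd_adj_branch w z : sd_adj (branch w) (branch z) -> e w z.
Proof.
case/existsP=> u /existsP[v /andP[uv]].
case pw: (sd_pos u v (val (branch w))) => [p|] //.
case pz: (sd_pos u v (val (branch z))) => [q|] // pq.
have e_uv : e u v by case/andP: uv.
case/sd_pos_inl: pw => [][-> ?]; case/sd_pos_inl: pz => [][-> ?] //; subst; try lia.
exact: e_sym.
Qed.

Lemma growth_sd_matching r : max_degree e <= 1 -> growth (@sd_adj T e k) r <= 2.
Proof.
move=> Ed; apply: growth_le_closed => c; have [w ->] := sd_branchP c.
exists (branch @: (w |: [set z | e w z])); split.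
- by apply: imset_f; rewrite setU11.
- move=> x y; have [x0 ->] := sd_branchP x; have [y0 ->] := sd_branchP y.
  move=> /sd_adj_branch x0y0 /imsetP[x1 x1_in /(congr1 val) [x0_x1]]; subst x1.
  apply: imset_f; move: x1_in; rewrite !inE => /orP[/eqP x0_w|w_x0].
    by rewrite -x0_w x0y0 orbT.
  by rewrite (neighbor_uniq Ed x0y0 (e_sym w_x0)) eqxx.
- apply: leq_trans (leq_imset_card _ _) _; rewrite cardsU1.
  exact: leq_add (leq_b1 _) (leq_trans (degree_le_max e w) Ed).
Qed.

End Unsubdivided.

End Subdivision.

Local Open Scope ring_scope.

Theorem theorem19 (R : realType) (Delta : nat) (f : nat -> R) :
  (0 < Delta)%N ->
  superlinear f ->
  (forall r : nat, (0 < r)%N -> (Delta * r + 1)%N%:R <= f r) ->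
  forall (T : finType) (e : rel T),
    simple_graph e -> max_degree e = Delta ->
    exists k : nat, (0 < k)%N /\
      forall r : nat, (0 < r)%N ->
        (growth (@sd_adj T e k) r)%:R <= f r.
Proof.
move=> Delta_gt0 f_superlinear f_ge T e e_simple max_deg.
have [Delta1 | Delta_gt1] : (Delta = 1 \/ 1 < Delta)%N by lia.
  exists 1%N; split=> // r r_gt0; apply: le_trans (f_ge r r_gt0); rewrite ler_nat.
  by apply: leq_trans (growth_sd_matching e_simple erefl r _) _; lia.
set C := (#|T| + #|T| * #|T|)%N.
have [N f_large] := f_superlinear (2 * C)%:R.
exists (2 * N).+1; split=> // r r_gt0.
have [short | long] := ltnP (2 * r) (2 * N).+1.
  apply: le_trans (f_ge r r_gt0); rewrite ler_nat.
  by apply: growth_sd_long_paths; rewrite ?max_deg.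
have r_ge_N : (N <= r)%N by lia.
have := f_large r r_ge_N r_gt0; rewrite ler_pdivlMr ?ltr0n // -natrM.
apply: le_trans; rewrite ler_nat.
apply: leq_trans (growth_le_card _ _) (leq_trans (card_sd_vertex _ _) _) => //.
by rewrite -/C; nia.
Qed.
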